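(* Let $\mathcal A$ be an NFA and let $R$ be a strict partial order on its states with $R\subseteq\ \subseteq^{\mathrm{bw}}$. Then $P(R,\mathrm{id})$ is good for pruning on NFA: $\mathcal L(\mathrm{Prune}(\mathcal A,P(R,\mathrm{id})))=\mathcal L(\mathcal A)$. In particular this holds for $R$ the strict part of $\subseteq^{\mathrm{bw}}$.
   Context: An NFA is $\mathcal A=(\Sigma,Q,I,F,\delta)$, $\delta\subseteq Q\times\Sigma\times Q$ (assumed forward and backward complete); its language is the set of finite words having a finite trace starting in $I$ and ending in $F$. Backward finite trace inclusion: $p\subseteq^{\mathrm{bw}}q$ iff for every finite word $w$, if there is a finite $w$-trace starting in $I$ and ending in $p$, then there is a finite $w$-trace starting in $I$ and ending in $q$. Strict part: $p\subseteq q$ and not $q\subseteq p$. $\mathrm{Prune}(\mathcal A,P)$ has transition set $\{t\in\delta:\nexists t'\in\delta,(t,t')\in P\}$; $P(R_b,R_f)=\{((p,\sigma,r),(p',\sigma,r'))\in\delta\times\delta:p\,R_b\,p',\ r\,R_f\,r'\}$; $\mathrm{id}$ is the identity. *)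

From mathcomp Require Import all_boot.
Set Implicit Arguments. Unset Strict Implicit. Unset Printing Implicit Defensive.

Record NFA (Sigma Q : finType) := mkNFA {
  init : Q -> Prop;
  final : Q -> Prop;
  delta : Q -> Sigma -> Q -> Prop
}.

Definition transition (Sigma Q : finType) := (Q * Sigma * Q)%type.

Definition fw_complete (Sigma Q : finType) (A : NFA Sigma Q) : Prop :=
  forall (p : Q) (a : Sigma), exists r, delta A p a r.
Definition bw_complete (Sigma Q : finType) (A : NFA Sigma Q) : Prop :=
  forall (r : Q) (a : Sigma), exists p, delta A p a r.

Inductive trace (Sigma Q : finType) (A : NFA Sigma Q) : Q -> seq Sigma -> Q -> Prop :=
  | trace_nil p : trace A p [::] p
  | trace_cons p a r w q : delta A p a r -> trace A r w q -> trace A p (a :: w) q.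

Definition lang (Sigma Q : finType) (A : NFA Sigma Q) (w : seq Sigma) : Prop :=
  exists p q, init A p /\ final A q /\ trace A p w q.

Definition bw_incl (Sigma Q : finType) (A : NFA Sigma Q) (p q : Q) : Prop :=
  forall w : seq Sigma,
    (exists i, init A i /\ trace A i w p) -> (exists i, init A i /\ trace A i w q).

Definition strict_part (T : Type) (R : T -> T -> Prop) : T -> T -> Prop :=
  fun x y => R x y /\ ~ R y x.

Definition strict_partial_order (T : Type) (R : T -> T -> Prop) : Prop :=
  (forall x, ~ R x x) /\ (forall x y z, R x y -> R y z -> R x z).

Definition Prel (Sigma Q : finType) (A : NFA Sigma Q) (Rb Rf : Q -> Q -> Prop)
  : transition Sigma Q -> transition Sigma Q -> Prop :=
  fun t t' => let: (p, a, r) := t in let: (p', a', r') := t' in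
    delta A p a r /\ delta A p' a' r' /\ a = a' /\ Rb p p' /\ Rf r r'.

Definition idrel (T : Type) : T -> T -> Prop := fun x y => x = y.

Definition Prune (Sigma Q : finType) (A : NFA Sigma Q)
  (P : transition Sigma Q -> transition Sigma Q -> Prop) : NFA Sigma Q :=
  mkNFA (init A) (final A)
    (fun p a r => delta A p a r /\
       ~ (exists t' : transition Sigma Q, delta A t'.1.1 t'.1.2 t'.2 /\ P (p, a, r) t')).

From mathcomp Require Import all_boot.
From Stdlib Require Import Classical ClassicalEpsilon.

(* Every word w that reaches a state q in A also reaches q in the pruned
   automaton. By induction on w = u a: among the states p that u reaches and
   that have an a-transition to q, pick one that is R-maximal (R is a strict
   order on a finite set). Its transition (p, a, q) survives pruning: a
   dominating transition (p', a, q) with R p p' would start in a state p'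
   that u also reaches, since R is contained in backward trace inclusion,
   contradicting maximality. *)

Section StrictOrder.
Variable T : finType.

Definition asbool (P : Prop) : bool :=
  if excluded_middle_informative P then true else false.

Lemma asboolP (P : Prop) : asbool P <-> P.
Proof. by rewrite /asbool; case: excluded_middle_informative. Qed.

Lemma strict_order_maximal (R : T -> T -> Prop) (S : T -> Prop) (x : T) :
  strict_partial_order R -> S x ->
  exists2 y, S y & forall z, S z -> ~ R y z.
Proof.
move=> [R_irr R_trans].
pose above y := #|[pred z | asbool (R y z)]|.
elim: {x}(above x) {-2}x (leqnn (above x)) => [|n IHn] x above_x Sx.
  exists x => // z _ Rxz; move: above_x; rewrite leqn0 => /eqP/card0_eq/(_ z).
  by rewrite inE => /negbT/negP; apply; apply/asboolP.
have [[z Sz Rxz]|no_above] := classic (exists2 z, S z & R x z); last first.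
  by exists x => // z Sz Rxz; apply: no_above; exists z.
apply: (IHn z) => //; rewrite -ltnS; apply: leq_trans above_x.
apply: proper_card; apply/properP; split.
  apply/subsetP => y; rewrite !inE => /asboolP Rzy.
  by apply/asboolP; apply: R_trans Rzy.
exists z; rewrite !inE; first exact/asboolP.
by apply/negP => /asboolP /R_irr.
Qed.

Lemma strict_part_order (R : T -> T -> Prop) :
  (forall x, R x x) -> (forall x y z, R x y -> R y z -> R x z) ->
  strict_partial_order (strict_part R).
Proof.
move=> R_refl R_trans; split=> [x [_ /(_ (R_refl x))] //|x y z [Rxy Nyx] [Ryz Nzy]].
by split=> [|Rzx]; [apply: R_trans Ryz | apply: Nyx; apply: R_trans Rzx].
Qed.

End StrictOrder.

Section Pruning.
Variables (Sigma Q : finType) (A : NFA Sigma Q).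

Definition reachable (B : NFA Sigma Q) (w : seq Sigma) (q : Q) : Prop :=
  exists i, init B i /\ trace B i w q.

Lemma trace_rcons (B : NFA Sigma Q) p u a q :
  trace B p (rcons u a) q <-> exists2 m, trace B p u m & delta B m a q.
Proof.
elim: u p => [|b u IHu] p /=; split.
- move=> t; inversion t as [|? ? r ? ? d tr]; subst; inversion tr; subst.
  by exists p => //; constructor.
- by case=> m t; inversion t; subst; econstructor; eauto; constructor.
- move=> t; inversion t as [|? ? r ? ? d tr]; subst; case/IHu: tr => m tm dm.
  by exists m => //; econstructor; eauto.
- case=> m t dm; inversion t; subst.
  by econstructor; eauto; apply/IHu; exists m.
Qed.

Lemma trace_prune P p w q : trace (Prune A P) p w q -> trace A p w q.
Proof. by elim=> [*|????? [d _] _ t]; [constructor | econstructor; eauto]. Qed.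

Lemma bw_incl_refl p : bw_incl A p p.
Proof. by []. Qed.

Lemma bw_incl_trans p q r : bw_incl A p q -> bw_incl A q r -> bw_incl A p r.
Proof. by move=> Hpq Hqr w /Hpq /Hqr. Qed.

Variable R : Q -> Q -> Prop.
Hypothesis R_order : strict_partial_order R.
Hypothesis R_bw_incl : forall p q, R p q -> bw_incl A p q.

Let A' := Prune A (Prel A R (@idrel Q)).

Lemma reachable_prune w q : reachable A w q -> reachable A' w q.
Proof.
elim/last_ind: w q => [|u a IHu] q [i [init_i t]].
  by inversion t; subst; exists q; split=> //; constructor.
case/trace_rcons: t => m tm dm.
pose S p := reachable A u p /\ delta A p a q.
have [|p [reach_p dp] p_max] := @strict_order_maximal _ R S m R_order.
  by split=> //; exists i.
case: (IHu p reach_p) => j [init_j tj]; exists j; split=> //.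
apply/trace_rcons; exists p => //; split=> // -[[[p' a'] q'] /= [d' [_ [_ [Ea [Rpp' Eq]]]]]].
rewrite /idrel in Eq; subst a' q'.
apply: (p_max p' _ Rpp'); split=> //; exact: R_bw_incl Rpp' _ reach_p.
Qed.

Lemma lang_prune w : lang A' w <-> lang A w.
Proof.
split=> [[p [q [ip [fq t]]]]|[p [q [ip [fq t]]]]].
  by exists p, q; do 2!split=> //; apply: trace_prune t.
have [i [ii ti]] := @reachable_prune w q (ex_intro _ p (conj ip t)).
by exists i, q.
Qed.

End Pruning.

Theorem theorem5p7 (Sigma Q : finType) (A : NFA Sigma Q)
  (Hfw : fw_complete A) (Hbw : bw_complete A) :
  (forall R : Q -> Q -> Prop,
     strict_partial_order R ->
     (forall p q, R p q -> bw_incl A p q) ->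
     forall w : seq Sigma, lang (Prune A (Prel A R (@idrel Q))) w <-> lang A w)
  /\
  (forall w : seq Sigma,
     lang (Prune A (Prel A (strict_part (bw_incl A)) (@idrel Q))) w <-> lang A w).
Proof.
split=> [R R_order R_bw_incl w|w]; first exact: lang_prune.
apply: lang_prune => [|p q []//].
exact: strict_part_order (@bw_incl_refl _ _ A) (@bw_incl_trans _ _ A).
Qed.
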